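(* Let $\bar y\in[0,1]^M$ with $\sum_{j=1}^M \bar y_j = p$, and for each $i\in[N]$ let $\tilde k_i$ be as defined in the context. Then for every $i\in[N]$ the vector $\bar v_i=(\bar v_i^1,\dots,\bar v_i^{K_i})$ given by $$\bar v_i^k=\begin{cases} D_i^{\tilde k_i+1}-D_i^k & \text{if } k\le \tilde k_i,\\ 0 & \text{otherwise},\end{cases}\qquad k\in[K_i],$$ is an optimal solution of $(DSP_i(\bar y))$, and its objective value equals the optimal value of $(SP_i(\bar y))$.
   Context: Data: clients $i\in[N]$, candidate sites $j\in[M]$ (where $[n]=\{1,\dots,n\}$), nonnegative distances $d_{ij}$, and an integer $p$ with $1\le p\le M$. For each client $i$, let $K_i$ be the number of distinct values among $\{d_{ij}: j\in[M]\}$ and let $D_i^1<\dots<D_i^{K_i}$ be these distinct values sorted increasingly. For $\bar y\in[0,1]^M$, the sub-problem $(SP_i(\bar y))$ is the linear program in variables $z_i^1,\dots,z_i^{K_i}$: minimize $D_i^1+\sum_{k=1}^{K_i-1}(D_i^{k+1}-D_i^k)z_i^k$ subject to $z_i^1\ge 1-\sum_{j:d_{ij}=D_i^1}\bar y_j$; $z_i^k-z_i^{k-1}\ge -\sum_{j:d_{ij}=D_i^k}\bar y_j$ for $k=2,\dots,K_i$; $z_i^k\ge 0$ for $k\in[K_i]$. Its dual $(DSP_i(\bar y))$ is the linear program in variables $v_i^1,\dots,v_i^{K_i}$: maximize $D_i^1+v_i^1\big(1-\sum_{j:d_{ij}=D_i^1}\bar y_j\big)-\sum_{k=2}^{K_i}v_i^k\sum_{j:d_{ij}=D_i^k}\bar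 y_j$ subject to $v_i^k-v_i^{k+1}\le D_i^{k+1}-D_i^k$ for $k\in[K_i-1]$; $v_i^k\ge 0$ for $k\in[K_i]$. Index $\tilde k_i$: $\tilde k_i=0$ if $\sum_{j:d_{ij}=D_i^1}\bar y_j\ge 1$; otherwise $\tilde k_i=\max\{k\in[K_i]: 1-\sum_{j:d_{ij}\le D_i^k}\bar y_j>0\}$. *)

From HB Require Import structures.
From mathcomp Require Import all_boot all_order all_algebra.
Set Implicit Arguments. Unset Strict Implicit. Unset Printing Implicit Defensive.
Import Order.TTheory GRing.Theory Num.Theory.
Local Open Scope ring_scope.

Section Defs.
Variables (R : realFieldType) (N M : nat) (d : 'I_N -> 'I_M -> R).

Definition Dseq (i : 'I_N) : seq R :=
  sort <=%R (undup [seq d i j | j <- enum 'I_M]).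

Definition Kc (i : 'I_N) : nat := size (Dseq i).

(* D_i^k, 1-based: D i 1 < ... < D i (Kc i). *)
Definition D (i : 'I_N) (k : nat) : R := nth 0 (Dseq i) k.-1.

Definition ysumEq (y : 'I_M -> R) (i : 'I_N) (k : nat) : R :=
  \sum_(j < M | d i j == D i k) y j.

Definition ysumLe (y : 'I_M -> R) (i : 'I_N) (k : nat) : R :=
  \sum_(j < M | d i j <= D i k) y j.

(* Objective and feasibility of (SP_i(y)); variables z_i^k stored as z k, k in [K_i]. *)
Definition SP_obj (i : 'I_N) (z : nat -> R) : R :=
  D i 1 + \sum_(1 <= k < Kc i) (D i k.+1 - D i k) * z k.

Definition SP_feasible (y : 'I_M -> R) (i : 'I_N) (z : nat -> R) : Prop :=
  [/\ z 1 >= 1 - ysumEq y i 1,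
      (forall k, (2 <= k <= Kc i)%N -> z k - z k.-1 >= - ysumEq y i k) &
      (forall k, (1 <= k <= Kc i)%N -> z k >= 0)].

Definition DSP_obj (y : 'I_M -> R) (i : 'I_N) (v : nat -> R) : R :=
  D i 1 + v 1 * (1 - ysumEq y i 1) - \sum_(2 <= k < (Kc i).+1) v k * ysumEq y i k.

Definition DSP_feasible (i : 'I_N) (v : nat -> R) : Prop :=
  (forall k, (1 <= k < Kc i)%N -> v k - v k.+1 <= D i k.+1 - D i k) /\
  (forall k, (1 <= k <= Kc i)%N -> v k >= 0).

Definition DSP_optimal (y : 'I_M -> R) (i : 'I_N) (v : nat -> R) : Prop :=
  DSP_feasible i v /\
  forall w, DSP_feasible i w -> DSP_obj y i w <= DSP_obj y i v.

Definition SP_optval (y : 'I_M -> R) (i : 'I_N) (val : R) : Prop :=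
  (exists z, SP_feasible y i z /\ SP_obj i z = val) /\
  forall z, SP_feasible y i z -> val <= SP_obj i z.

Definition ktilde (y : 'I_M -> R) (i : 'I_N) : nat :=
  if ysumEq y i 1 >= 1 then 0%N
  else \max_(1 <= k < (Kc i).+1 | 0 < 1 - ysumLe y i k) k.

Definition vbar (y : 'I_M -> R) (i : 'I_N) (k : nat) : R :=
  if (k <= ktilde y i)%N then D i (ktilde y i).+1 - D i k else 0.

End Defs.

(* Weak duality holds between (SP_i) and (DSP_i) as soon as [v^K z^K = 0],
   because the duality gap expands into a sum of products of dual slacks and
   primal slacks.  The primal point [z^k = 1 - sum_{d_ij <= D^k} y_j] for
   [k <= k~] (and 0 beyond) and the dual point [v-bar] are both feasible by the
   choice of [k~], and every product in the expansion vanishes on them, so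
   their objective values coincide and both points are optimal. *)
From HB Require Import structures.
From mathcomp Require Import all_boot all_order all_algebra.
From mathcomp Require Import ring lra zify.
Import Order.TTheory GRing.Theory Num.Theory.
Local Open Scope ring_scope.

Lemma duality_gap_expand (R : realFieldType) (D s w z : nat -> R) (n : nat) :
  (D 1%N + \sum_(1 <= k < n.+1) (D k.+1 - D k) * z k)
    - (D 1%N + w 1%N * (1 - s 1%N) - \sum_(2 <= k < n.+2) w k * s k)
  = \sum_(1 <= k < n.+1) (D k.+1 - D k - (w k - w k.+1)) * z k
    - w n.+1 * z n.+1 + w 1%N * (z 1%N - (1 - s 1%N))
    + \sum_(2 <= k < n.+2) w k * (z k - z k.-1 + s k).
Proof.
elim: n => [|n IH]; first by rewrite !big_geq //; ring.
rewrite !(big_nat_recr n.+1) // !(big_nat_recr n.+2) //=.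
move: IH; set a := \sum_(1 <= k < n.+1) _; set b := \sum_(2 <= k < n.+2) _.
set e := \sum_(1 <= k < n.+1) _; set f := \sum_(2 <= k < n.+2) _.
lra.
Qed.

Section SortedDistances.
Context {R : realFieldType} {N M : nat} {d : 'I_N -> 'I_M -> R} {i : 'I_N}.
Local Notation K := (Kc d i).

Lemma mem_Dseq j : d i j \in Dseq d i.
Proof. by rewrite mem_sort mem_undup map_f ?mem_enum. Qed.

Lemma D_onto j : exists2 m, (1 <= m <= K)%N & d i j = D d i m.
Proof.
exists (index (d i j) (Dseq d i)).+1; first by rewrite /= index_mem mem_Dseq.
by rewrite /D nth_index ?mem_Dseq.
Qed.

Lemma ltr_D a b : (1 <= a)%N -> (a < b <= K)%N -> D d i a < D d i b.
Proof.
move=> a1 /andP[ab bK].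
have sortedD : sorted <%R (Dseq d i).
  by rewrite lt_sorted_uniq_le sort_uniq undup_uniq sort_sorted //; apply: le_total.
by apply: (sorted_ltn_nth lt_trans) => //; rewrite ?inE -/(Kc d i); lia.
Qed.

Lemma ler_D a b : (1 <= a <= K)%N -> (1 <= b <= K)%N ->
  (D d i a <= D d i b) = (a <= b)%N.
Proof.
move=> /andP[a1 aK] /andP[b1 bK].
case: (ltngtP a b) => [ab|ba|->]; last exact: lexx.
- by rewrite ltW // ltr_D ?ab.
- by apply/negbTE; rewrite -ltNge ltr_D ?ba.
Qed.

Lemma eqr_D a b : (1 <= a <= K)%N -> (1 <= b <= K)%N ->
  (D d i a == D d i b) = (a == b)%N.
Proof. by move=> ha hb; rewrite eq_le !ler_D // eqn_leq. Qed.

Lemma Kc_gt0 : (0 < M)%N -> (0 < K)%N.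
Proof. by move=> M_gt0; have := mem_Dseq (Ordinal M_gt0); rewrite /Kc; case: Dseq. Qed.

Context {y : 'I_M -> R}.

Lemma ysumLe1 : ysumLe d y i 1 = ysumEq d y i 1.
Proof.
apply: eq_bigl => j; have [m /andP[m1 mK] ->] := D_onto j.
by rewrite ler_D ?eqr_D //; lia.
Qed.

Lemma ysumLeS k : (2 <= k <= K)%N ->
  ysumLe d y i k = ysumLe d y i k.-1 + ysumEq d y i k.
Proof.
move=> /andP[k2 kK].
rewrite /ysumLe /ysumEq (bigID (fun j => d i j == D d i k)) /= addrC.
congr (_ + _); apply: eq_bigl => j; last by case: eqP => [->|]; rewrite ?lexx ?andbF.
have [m mK ->] := D_onto j.
by rewrite !ler_D ?eqr_D //; lia.
Qed.

Lemma ysumLeK : ysumLe d y i K = \sum_(j < M) y j.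
Proof.
apply: eq_bigl => j; have [m /andP[m1 mK] ->] := D_onto j.
by rewrite ler_D //; lia.
Qed.

Lemma SP_obj_sub_DSP_obj w z : (0 < K)%N ->
  SP_obj d i z - DSP_obj d y i w =
    \sum_(1 <= k < K) (D d i k.+1 - D d i k - (w k - w k.+1)) * z k
    - w K * z K + w 1%N * (z 1%N - (1 - ysumEq d y i 1))
    + \sum_(2 <= k < K.+1) w k * (z k - z k.-1 + ysumEq d y i k).
Proof. by rewrite /SP_obj /DSP_obj; case: K => // n _; apply: duality_gap_expand. Qed.

(* The dual constraint attached to [z^K] is missing from (DSP_i), hence the
   complementarity assumption on the last coordinate. *)
Lemma DSP_obj_le_SP_obj w z : (0 < K)%N ->
  DSP_feasible d i w -> SP_feasible d y i z -> w K * z K = 0 ->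
  DSP_obj d y i w <= SP_obj d i z.
Proof.
move=> K_gt0 [w_slack w_ge0] [z1 z_slack z_ge0] wzK.
rewrite -subr_ge0 SP_obj_sub_DSP_obj // wzK subr0.
apply: addr_ge0; first apply: addr_ge0.
- rewrite big_nat; apply: sumr_ge0 => k hk.
  by rewrite mulr_ge0 ?subr_ge0 ?w_slack ?z_ge0 //; lia.
- by rewrite mulr_ge0 ?subr_ge0 ?w_ge0 //; lia.
- rewrite big_nat; apply: sumr_ge0 => k hk.
  apply: mulr_ge0; first by apply: w_ge0; lia.
  have /z_slack : (2 <= k <= K)%N by lia.
  lra.
Qed.

Hypothesis y_ge0 : forall j, 0 <= y j.

Lemma ysumEq_ge0 k : 0 <= ysumEq d y i k.
Proof. exact: sumr_ge0. Qed.

Lemma ysumLe_mono a b : (1 <= a)%N -> (a <= b <= K)%N ->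
  ysumLe d y i a <= ysumLe d y i b.
Proof.
move=> a1 /andP[ab bK]; rewrite /ysumLe [leRHS]big_mkcond [leLHS]big_mkcond.
apply: ler_sum => j _; case: ifP => h1; case: ifP => h2 //.
by move: h2; rewrite (le_trans h1) // ler_D //; lia.
Qed.

End SortedDistances.

Definition zbar {R : realFieldType} {N M : nat} (d : 'I_N -> 'I_M -> R)
    (y : 'I_M -> R) (i : 'I_N) (k : nat) : R :=
  if (k <= ktilde d y i)%N then 1 - ysumLe d y i k else 0.

Section OptimalPair.
Context {R : realFieldType} {N M : nat} (d : 'I_N -> 'I_M -> R) {y : 'I_M -> R}.
Hypotheses (y_ge0 : forall j, 0 <= y j) (ysum_ge1 : 1 <= \sum_(j < M) y j).
Variable i : 'I_N.
Local Notation K := (Kc d i).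
Local Notation kt := (ktilde d y i).

Lemma Kc_gt0_ysum : (0 < K)%N.
Proof.
apply: Kc_gt0; rewrite lt0n; apply/eqP => M0.
by move: ysum_ge1; rewrite big1 ?ler10 // => j; have := leq_trans (ltn_ord j) (eq_leq M0).
Qed.

Lemma ktilde_spec : [/\ (kt < K)%N,
  forall k, (1 <= k <= kt)%N -> ysumLe d y i k < 1 & 1 <= ysumLe d y i kt.+1].
Proof.
have K_gt0 := Kc_gt0_ysum.
rewrite /ktilde; case: ifP => [s1_ge1|/negbT s1_lt1].
  by split=> // [k|]; [lia | rewrite ysumLe1].
rewrite -ltNge in s1_lt1.
set kmax := \max_(1 <= k < K.+1 | _) k.
have le_kmax k : (1 <= k <= K)%N -> 0 < 1 - ysumLe d y i k -> (k <= kmax)%N.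
  move=> hk hP; apply: (@leq_bigmax_seq _ _ _ (fun k => k)) => //.
  by rewrite mem_index_iota; lia.
have kmax_in : kmax = 0%N \/ (1 <= kmax <= K)%N /\ 0 < 1 - ysumLe d y i kmax.
  rewrite /kmax big_seq_cond.
  apply: (big_ind (fun x => x = 0%N \/ (1 <= x <= K)%N /\ 0 < 1 - ysumLe d y i x)).
  - by left.
  - by move=> x1 x2 h1 h2; rewrite /maxn; case: ltnP.
  - by move=> k /andP[]; rewrite mem_index_iota => hk hP; right; split => //; lia.
have kmax_ge1 : (1 <= kmax)%N by apply: le_kmax; rewrite ?ysumLe1; [lia | lra].
have [kmaxK kmax_lt1] : (1 <= kmax <= K)%N /\ 0 < 1 - ysumLe d y i kmax.
  by case: kmax_in => // kmax0; rewrite kmax0 in kmax_ge1.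
have kmax_ltK : (kmax < K)%N.
  rewrite ltn_neqAle; case/andP: kmaxK => _ ->; rewrite andbT.
  by apply: contraTneq kmax_lt1 => ->; rewrite ysumLeK -leNgt subr_le0.
split=> //.
- move=> k hk.
  have : ysumLe d y i k <= ysumLe d y i kmax by apply: ysumLe_mono => //; lia.
  lra.
- rewrite leNgt; apply/negP => lt1.
  suff : (kmax.+1 <= kmax)%N by rewrite ltnn.
  by apply: le_kmax; [lia | lra].
Qed.

Lemma vbar_feasible : DSP_feasible d i (vbar d y i).
Proof.
have [ktK _ _] := ktilde_spec.
split=> k hk; rewrite /vbar.
- case: (leqP k kt) => h1; case: (leqP k.+1 kt) => h2; [lra | | lia |].
  + have -> : k = kt by lia.
    by rewrite subr0.
  + by rewrite subrr subr_ge0; apply/ltW/ltr_D; lia.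
- by case: leqP => // h; rewrite subr_ge0 ler_D //; lia.
Qed.

Lemma zbar_feasible : SP_feasible d y i (zbar d y i).
Proof.
have [_ lt1 ge1] := ktilde_spec.
split; rewrite /zbar.
- case: leqP => h; last by rewrite ysumLe1.
  have kt0 : kt = 0%N by lia.
  by rewrite kt0 ysumLe1 in ge1; lra.
- move=> k hk; have Sk : ysumLe d y i k = _ + _ := ysumLeS k hk.
  have : 0 <= ysumEq d y i k by apply: ysumEq_ge0.
  case: (leqP k kt) => h1; first by rewrite ifT ?(leq_trans (leq_pred k) h1); lra.
  case: (leqP k.-1 kt) => h2; last lra.
  have ek : k = kt.+1 by lia.
  by rewrite ek /= in Sk *; lra.
- move=> k hk; case: leqP => // h.
  by rewrite subr_ge0 ltW // lt1 //; lia.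
Qed.

Lemma vbar_Kc : vbar d y i K = 0.
Proof. by have [ktK _ _] := ktilde_spec; rewrite /vbar leqNgt ktK. Qed.

Lemma zbar_Kc : zbar d y i K = 0.
Proof. by have [ktK _ _] := ktilde_spec; rewrite /zbar leqNgt ktK. Qed.

Lemma SP_obj_zbar : SP_obj d i (zbar d y i) = DSP_obj d y i (vbar d y i).
Proof.
have vbar_out k : (kt < k)%N -> vbar d y i k = 0 by move=> h; rewrite /vbar leqNgt h.
have zbar_out k : (kt < k)%N -> zbar d y i k = 0 by move=> h; rewrite /zbar leqNgt h.
apply/eqP; rewrite -subr_eq0 SP_obj_sub_DSP_obj ?Kc_gt0_ysum //.
rewrite zbar_Kc mulr0 subr0.
rewrite big1_seq ?add0r => [|k /andP[_]]; last first.
  rewrite mem_index_iota => hk.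
  case: (leqP k kt) => h1; last by rewrite zbar_out ?mulr0.
  suff -> : D d i k.+1 - D d i k - (vbar d y i k - vbar d y i k.+1) = 0 by rewrite mul0r.
  rewrite /vbar h1; case: leqP => h2; last ring.
  by rewrite (_ : k = kt); [ring | lia].
rewrite big1_seq ?addr0 => [|k /andP[_]]; last first.
  rewrite mem_index_iota => hk.
  case: (leqP k kt) => h1; last by rewrite vbar_out ?mul0r.
  suff -> : zbar d y i k - zbar d y i k.-1 + ysumEq d y i k = 0 by rewrite mulr0.
  rewrite /zbar h1 ifT ?(leq_trans (leq_pred k) h1) // (ysumLeS k); [ring | lia].
case: (leqP 1 kt) => h1; last by rewrite vbar_out ?mul0r.
by rewrite /zbar h1 ysumLe1 subrr mulr0.
Qed.

Lemma vbar_optimal : DSP_optimal d y i (vbar d y i).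
Proof.
split=> [|w w_feas]; first exact: vbar_feasible.
rewrite -SP_obj_zbar; apply: DSP_obj_le_SP_obj;
  rewrite ?Kc_gt0_ysum ?zbar_Kc ?mulr0 //; exact: zbar_feasible.
Qed.

Lemma SP_optval_vbar : SP_optval d y i (DSP_obj d y i (vbar d y i)).
Proof.
split=> [|z z_feas].
  by exists (zbar d y i); rewrite SP_obj_zbar; split=> //; apply: zbar_feasible.
apply: DSP_obj_le_SP_obj; rewrite ?Kc_gt0_ysum ?vbar_Kc ?mul0r //; exact: vbar_feasible.
Qed.

End OptimalPair.

Theorem proposition1 (R : realFieldType) (N M : nat) (d : 'I_N -> 'I_M -> R)
    (p : nat) (y : 'I_M -> R) :
  (forall i j, 0 <= d i j) ->
  (1 <= p <= M)%N ->
  (forall j, 0 <= y j <= 1) ->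
  \sum_(j < M) y j = p%:R ->
  forall i : 'I_N,
    DSP_optimal d y i (vbar d y i) /\
    SP_optval d y i (DSP_obj d y i (vbar d y i)).
Proof.
move=> _ /andP[p_ge1 _] y01 ysum i.
have y_ge0 j : 0 <= y j by case/andP: (y01 j).
have ysum_ge1 : 1 <= \sum_(j < M) y j by rewrite ysum ler1n.
by split; [apply: vbar_optimal | apply: SP_optval_vbar].
Qed.
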